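(* Let $I$ be an inverse semigroup [respectively, inverse monoid] generated as a semigroup [monoid] by a (not necessarily finite) set $\Sigma$, and let $L$ be the idempotent problem of $I$ with respect to $\Sigma$. Then the map sending each element $s\in I$ to the $\equiv_L$-class of any word over $\Sigma$ representing $s$ is a well-defined, surjective, idempotent-pure morphism from $I$ onto the syntactic semigroup $M^+(L)$ [respectively, onto the syntactic monoid $M(L)$]. Moreover, its kernel is the greatest idempotent-pure congruence on $I$. *)

From Stdlib Require Import List.
Import ListNotations.
Set Implicit Arguments.

Definition associative_op (S : Type) (mul : S -> S -> S) : Prop :=
  forall a b c, mul a (mul b c) = mul (mul a b) c.

Definition idempotent (S : Type) (mul : S -> S -> S) (e : S) : Prop :=
  mul e e = e.

Definition is_inverse_of (S : Type) (mul : S -> S -> S) (a b : S) : Prop :=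
  mul (mul a b) a = a /\ mul (mul b a) b = b.

Definition inverse_semigroup (S : Type) (mul : S -> S -> S) : Prop :=
  associative_op mul /\
  forall a, exists b, is_inverse_of mul a b /\
                 forall b', is_inverse_of mul a b' -> b' = b.

Definition is_identity (S : Type) (mul : S -> S -> S) (one : S) : Prop :=
  forall a, mul one a = a /\ mul a one = a.

Definition inverse_monoid (S : Type) (mul : S -> S -> S) (one : S) : Prop :=
  inverse_semigroup mul /\ is_identity mul one.

Definition sg_morphism (S T : Type) (mulS : S -> S -> S) (mulT : T -> T -> T)
  (f : S -> T) : Prop :=
  forall a b, f (mulS a b) = mulT (f a) (f b).

Definition surjective_map (S T : Type) (f : S -> T) : Prop :=
  forall t, exists s, f s = t.

Definition idempotent_pure_map (S T : Type) (mulS : S -> S -> S)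
  (mulT : T -> T -> T) (f : S -> T) : Prop :=
  forall s, idempotent mulT (f s) -> idempotent mulS s.

Definition kernel (S T : Type) (f : S -> T) : S -> S -> Prop :=
  fun a b => f a = f b.

Definition congruence (S : Type) (mul : S -> S -> S) (R : S -> S -> Prop) : Prop :=
  (forall a, R a a) /\ (forall a b, R a b -> R b a) /\
  (forall a b c, R a b -> R b c -> R a c) /\
  (forall a b c, R a b -> R (mul c a) (mul c b) /\ R (mul a c) (mul b c)).

Definition idempotent_pure_congruence (S : Type) (mul : S -> S -> S)
  (R : S -> S -> Prop) : Prop :=
  congruence mul R /\
  forall a e, idempotent mul e -> R a e -> idempotent mul a.

Definition greatest_idempotent_pure_congruence (S : Type) (mul : S -> S -> S)
  (R : S -> S -> Prop) : Prop :=
  idempotent_pure_congruence mul R /\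
  forall R', idempotent_pure_congruence mul R' -> forall a b, R' a b -> R a b.

(* Words over Sigma are lists; Sigma^+ = nonempty lists. *)

(* value in I of the nonempty word a :: w (semigroup generated by gen) *)
Definition eval_sg (Sigma S : Type) (mul : S -> S -> S) (gen : Sigma -> S)
  (a : Sigma) (w : list Sigma) : S :=
  fold_left (fun x b => mul x (gen b)) w (gen a).

Definition eval_mon (Sigma S : Type) (mul : S -> S -> S) (one : S)
  (gen : Sigma -> S) (w : list Sigma) : S :=
  fold_left (fun x b => mul x (gen b)) w one.

Definition idem_problem_sg (Sigma S : Type) (mul : S -> S -> S)
  (gen : Sigma -> S) (w : list Sigma) : Prop :=
  exists a w', w = a :: w' /\ idempotent mul (eval_sg mul gen a w').

Definition idem_problem_mon (Sigma S : Type) (mul : S -> S -> S) (one : S)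
  (gen : Sigma -> S) (w : list Sigma) : Prop :=
  idempotent mul (eval_mon mul one gen w).

Definition synt_eq (Sigma : Type) (L : list Sigma -> Prop) (u v : list Sigma) : Prop :=
  forall x y : list Sigma, L (x ++ u ++ y) <-> L (x ++ v ++ y).

(* (M, mulM) with q is (a copy of) the syntactic semigroup M^+(L) = Sigma^+ / ==_L:
   q is a surjective morphism from Sigma^+ onto M whose kernel is ==_L. *)
Definition is_syntactic_semigroup (Sigma M : Type) (L : list Sigma -> Prop)
  (mulM : M -> M -> M) (q : list Sigma -> M) : Prop :=
  associative_op mulM /\
  (forall m, exists a w, q (a :: w) = m) /\
  (forall u v, u <> [] -> v <> [] -> q (u ++ v) = mulM (q u) (q v)) /\
  (forall u v, u <> [] -> v <> [] -> (q u = q v <-> synt_eq L u v)).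

(* (M, mulM, oneM) with q is (a copy of) the syntactic monoid M(L) = Sigma^{*} / ==_L. *)
Definition is_syntactic_monoid (Sigma M : Type) (L : list Sigma -> Prop)
  (mulM : M -> M -> M) (oneM : M) (q : list Sigma -> M) : Prop :=
  associative_op mulM /\ is_identity mulM oneM /\
  (forall m, exists w, q w = m) /\
  q [] = oneM /\
  (forall u v, q (u ++ v) = mulM (q u) (q v)) /\
  (forall u v, q u = q v <-> synt_eq L u v).

From Stdlib Require Import List IndefiniteDescription.
Import ListNotations.
Set Implicit Arguments.

(* Let I be an inverse semigroup with idempotent set E.  Call s and t
   E-equivalent ([idem_synt]) when for all x, y in I^1 the elements x s y and
   x t y are simultaneously idempotent (the syntactic congruence of E in I).
   Every congruence whose classes saturate E is contained in it, so a
   morphism with E-equivalence as kernel has the greatest idempotent-pure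
   congruence as kernel. *)

Section Idempotents.

Variables (I : Type) (mul : I -> I -> I).
Hypothesis inv_sg : inverse_semigroup mul.

Let assoc : associative_op mul := proj1 inv_sg.

Lemma inverse_unique (a b b' : I) :
  is_inverse_of mul a b -> is_inverse_of mul a b' -> b = b'.
Proof.
  intros Hb Hb'. destruct (proj2 inv_sg a) as [c [_ Uc]].
  rewrite (Uc b Hb), (Uc b' Hb'). reflexivity.
Qed.

Lemma inverse_sym (a b : I) : is_inverse_of mul a b -> is_inverse_of mul b a.
Proof. unfold is_inverse_of; tauto. Qed.

Lemma idempotent_self_inverse (e : I) :
  idempotent mul e -> is_inverse_of mul e e.
Proof. unfold is_inverse_of, idempotent; intros He; rewrite !He; split; reflexivity. Qed.

(* If x is the inverse of ef, then f x e is an idempotent which is also an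
   inverse of ef; so x = f x e and ef, the inverse of an idempotent, is that
   idempotent itself. *)
Lemma idempotent_mul (e f : I) :
  idempotent mul e -> idempotent mul f -> idempotent mul (mul e f).
Proof.
  unfold idempotent; intros He Hf.
  destruct (proj2 inv_sg (mul e f)) as [x [[Hx1 Hx2] _]].
  set (y := mul (mul f x) e).
  assert (Hy : mul y y = y).
  { unfold y. rewrite <- Hx2 at 3. rewrite !assoc. reflexivity. }
  assert (y_inv : is_inverse_of mul (mul e f) y).
  { split; unfold y.
    - replace (mul (mul (mul e f) (mul (mul f x) e)) (mul e f))
        with (mul (mul (mul e (mul f f)) x) (mul (mul e e) f))
        by (rewrite !assoc; reflexivity).
      rewrite He, Hf. exact Hx1.
    - replace (mul (mul (mul (mul f x) e) (mul e f)) (mul (mul f x) e))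
        with (mul (mul f (mul (mul x (mul (mul e e) (mul f f))) x)) e)
        by (rewrite !assoc; reflexivity).
      rewrite He, Hf, Hx2. reflexivity. }
  assert (Exy : x = y) by (apply (@inverse_unique (mul e f)); [split |]; assumption).
  assert (Eef : mul e f = y).
  { apply (@inverse_unique y).
    - apply inverse_sym. rewrite <- Exy. split; assumption.
    - apply idempotent_self_inverse. exact Hy. }
  rewrite Eef. exact Hy.
Qed.

(* A morphism whose kernel classes saturate E is idempotent-pure: if phi s is
   idempotent and t is the inverse of s, then phi s = phi ((s t)(t s)). *)
Lemma idempotent_pure_of_saturating (M : Type) (mulM : M -> M -> M) (phi : I -> M) :
  sg_morphism mul mulM phi ->
  (forall s t, phi s = phi t -> idempotent mul s -> idempotent mul t) ->
  idempotent_pure_map mul mulM phi.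
Proof.
  intros Hm Hsat s Hs. unfold idempotent in Hs.
  destruct (proj2 inv_sg s) as [t [[Hsts Htst] _]].
  assert (Ets : idempotent mul (mul t s)).
  { unfold idempotent. rewrite assoc, Htst. reflexivity. }
  assert (Est : idempotent mul (mul s t)).
  { unfold idempotent. rewrite assoc, Hsts. reflexivity. }
  assert (Pt : phi t = phi (mul (mul t s) (mul s t))).
  { rewrite <- Htst at 1.
    rewrite (Hm (mul t s) t), (Hm t s), <- Hs, <- (Hm s s), <- (Hm t (mul s s)), <- Hm.
    f_equal. rewrite !assoc. reflexivity. }
  assert (Ptt : mulM (phi t) (phi t) = phi t).
  { rewrite Pt, <- Hm. f_equal. apply idempotent_mul; assumption. }
  apply (Hsat (mul (mul s t) (mul t s))).
  - symmetry. rewrite <- Hsts at 1.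
    rewrite (Hm (mul s t) s), (Hm s t), <- Ptt, <- (Hm t t), <- (Hm s (mul t t)), <- Hm.
    f_equal. rewrite !assoc. reflexivity.
  - apply idempotent_mul; assumption.
Qed.

End Idempotents.

Section IdempotentSyntactic.

Variables (I : Type) (mul : I -> I -> I).

(* Multiplication by an element of I^1 on the left and on the right, where
   [None] stands for the adjoined identity. *)
Definition mul_ctx (x y : option I) (s : I) : I :=
  let xs := match x with Some a => mul a s | None => s end in
  match y with Some b => mul xs b | None => xs end.

Definition idem_synt (s t : I) : Prop :=
  forall x y, idempotent mul (mul_ctx x y s) <-> idempotent mul (mul_ctx x y t).

Lemma congruence_mul_ctx (R : I -> I -> Prop) :
  congruence mul R -> forall x y s t, R s t -> R (mul_ctx x y s) (mul_ctx x y t).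
Proof.
  intros [_ [_ [_ C]]] x y s t Hst. unfold mul_ctx.
  destruct x, y; repeat apply C; assumption.
Qed.

Lemma idempotent_pure_congruence_idem_synt (R : I -> I -> Prop) :
  idempotent_pure_congruence mul R -> forall s t, R s t -> idem_synt s t.
Proof.
  intros [HR Hpure] s t Hst x y.
  pose proof (@congruence_mul_ctx R HR x y s t Hst) as Hctx.
  destruct HR as [_ [Hsym _]].
  split; intros He; eapply Hpure; eauto.
Qed.

Lemma kernel_greatest_idempotent_pure (M : Type) (mulM : M -> M -> M) (phi : I -> M) :
  sg_morphism mul mulM phi ->
  (forall s t, phi s = phi t <-> idem_synt s t) ->
  greatest_idempotent_pure_congruence mul (kernel phi).
Proof.
  intros Hm Hker. split.
  - split.
    + unfold kernel. repeat split; intros; try congruence; rewrite !Hm; congruence.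
    + intros a e He Hae. exact (proj2 (proj1 (Hker a e) Hae None None) He).
  - intros R HR s t Hst. apply Hker.
    exact (idempotent_pure_congruence_idem_synt HR s t Hst).
Qed.

End IdempotentSyntactic.

Lemma factor_through_surjection (W I M : Type) (ev : W -> I) (q : W -> M) :
  (forall s, exists w, ev w = s) ->
  (forall u v, ev u = ev v -> q u = q v) ->
  exists phi : I -> M, forall w, phi (ev w) = q w.
Proof.
  intros ev_onto q_compat.
  exists (fun s => q (proj1_sig (constructive_indefinite_description _ (ev_onto s)))).
  intros w. destruct (constructive_indefinite_description _ (ev_onto (ev w))) as [v Hv].
  apply q_compat. exact Hv.
Qed.

(* The abstract form of the theorem: W is a set of words with a
   concatenation [cat], evaluated onto I by [ev] and onto M by [q]. *)
Section Factorization.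

Variables (I W M : Type) (mul : I -> I -> I) (mulM : M -> M -> M).
Variables (ev : W -> I) (q : W -> M) (cat : W -> W -> W).
Hypothesis inv_sg : inverse_semigroup mul.
Hypothesis ev_onto : forall s, exists w, ev w = s.
Hypothesis q_onto : forall m, exists w, q w = m.
Hypothesis ev_cat : forall u v, ev (cat u v) = mul (ev u) (ev v).
Hypothesis q_cat : forall u v, q (cat u v) = mulM (q u) (q v).
Hypothesis q_synt : forall u v, q u = q v <-> idem_synt mul (ev u) (ev v).

Lemma syntactic_factorization :
  exists phi : I -> M,
    (forall w, phi (ev w) = q w) /\
    sg_morphism mul mulM phi /\
    surjective_map phi /\
    idempotent_pure_map mul mulM phi /\
    greatest_idempotent_pure_congruence mul (kernel phi).
Proof.
  destruct (@factor_through_surjection W I M ev q ev_onto) as [phi Hphi].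
  { intros u v Euv. apply q_synt. rewrite Euv. intros x y. reflexivity. }
  assert (Hm : sg_morphism mul mulM phi).
  { intros s t. destruct (ev_onto s) as [u <-], (ev_onto t) as [v <-].
    rewrite <- ev_cat, !Hphi. apply q_cat. }
  assert (Hker : forall s t, phi s = phi t <-> idem_synt mul s t).
  { intros s t. destruct (ev_onto s) as [u <-], (ev_onto t) as [v <-].
    rewrite !Hphi. apply q_synt. }
  exists phi. split; [exact Hphi |]. split; [exact Hm |]. split; [| split].
  - intros m. destruct (q_onto m) as [w <-]. exists (ev w). apply Hphi.
  - apply (idempotent_pure_of_saturating inv_sg Hm).
    intros s t Est Hs. exact (proj1 (proj1 (Hker s t) Est None None) Hs).
  - exact (kernel_greatest_idempotent_pure Hm Hker).
Qed.

End Factorization.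

Section Words.

Variables (Sigma I : Type) (mul : I -> I -> I) (gen : Sigma -> I).
Hypothesis assoc : associative_op mul.

Lemma fold_left_mul (w : list Sigma) (x y : I) :
  fold_left (fun z b => mul z (gen b)) w (mul x y) =
  mul x (fold_left (fun z b => mul z (gen b)) w y).
Proof.
  revert y; induction w as [|c w IH]; intros y; simpl.
  - reflexivity.
  - rewrite <- assoc. apply IH.
Qed.

Lemma eval_sg_app (a : Sigma) (u : list Sigma) (b : Sigma) (v : list Sigma) :
  eval_sg mul gen a (u ++ b :: v) = mul (eval_sg mul gen a u) (eval_sg mul gen b v).
Proof. unfold eval_sg. rewrite fold_left_app. apply fold_left_mul. Qed.

Lemma eval_mon_app (one : I) (u v : list Sigma) :
  is_identity mul one ->
  eval_mon mul one gen (u ++ v) = mul (eval_mon mul one gen u) (eval_mon mul one gen v).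
Proof.
  intros Hone. unfold eval_mon. rewrite fold_left_app, <- fold_left_mul.
  f_equal. symmetry. apply Hone.
Qed.

(* The value in I^1 of a possibly empty word in the semigroup case. *)
Definition eval_opt (w : list Sigma) : option I :=
  match w with [] => None | a :: w' => Some (eval_sg mul gen a w') end.

Lemma idem_problem_sg_cons (a : Sigma) (w : list Sigma) :
  idem_problem_sg mul gen (a :: w) <-> idempotent mul (eval_sg mul gen a w).
Proof.
  split.
  - intros [b [v [E H]]]. injection E as -> ->. exact H.
  - intros H. exists a, w. split; [reflexivity | exact H].
Qed.

Lemma idem_problem_sg_ctx (x y : list Sigma) (a : Sigma) (w : list Sigma) :
  idem_problem_sg mul gen (x ++ (a :: w) ++ y) <->
  idempotent mul (mul_ctx mul (eval_opt x) (eval_opt y) (eval_sg mul gen a w)).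
Proof.
  destruct x as [|c x], y as [|d y]; cbn [app eval_opt mul_ctx].
  - rewrite app_nil_r. apply idem_problem_sg_cons.
  - rewrite idem_problem_sg_cons, eval_sg_app. reflexivity.
  - rewrite app_nil_r, idem_problem_sg_cons, eval_sg_app. reflexivity.
  - rewrite idem_problem_sg_cons, !eval_sg_app, assoc. reflexivity.
Qed.

Lemma synt_eq_idem_problem_sg (a : Sigma) (u : list Sigma) (b : Sigma) (v : list Sigma) :
  (forall s : I, exists c w, eval_sg mul gen c w = s) ->
  synt_eq (idem_problem_sg mul gen) (a :: u) (b :: v) <->
  idem_synt mul (eval_sg mul gen a u) (eval_sg mul gen b v).
Proof.
  intros Hgen.
  assert (eval_opt_onto : forall o : option I, exists w, eval_opt w = o).
  { intros [s|]; [| exists []; reflexivity].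
    destruct (Hgen s) as [c [w <-]]. exists (c :: w). reflexivity. }
  split.
  - intros Hsyn ox oy.
    destruct (eval_opt_onto ox) as [x <-], (eval_opt_onto oy) as [y <-].
    rewrite <- !idem_problem_sg_ctx. apply Hsyn.
  - intros Hsyn x y. rewrite !idem_problem_sg_ctx. apply Hsyn.
Qed.

(* Monoid case: syntactic equivalence of words is E-equivalence of their
   values; here I^1 = I, the adjoined identity acting like [one]. *)
Lemma synt_eq_idem_problem_mon (one : I) (u v : list Sigma) :
  is_identity mul one ->
  (forall s : I, exists w, eval_mon mul one gen w = s) ->
  synt_eq (idem_problem_mon mul one gen) u v <->
  idem_synt mul (eval_mon mul one gen u) (eval_mon mul one gen v).
Proof.
  intros Hone Hgen.
  assert (Hctx : forall x y w, idem_problem_mon mul one gen (x ++ w ++ y) <->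
    idempotent mul (mul (mul (eval_mon mul one gen x) (eval_mon mul one gen w))
                        (eval_mon mul one gen y))).
  { intros x y w. unfold idem_problem_mon.
    rewrite !eval_mon_app, assoc by exact Hone. reflexivity. }
  assert (ctx_words : forall ox oy, exists x y, forall s,
    mul_ctx mul ox oy s = mul (mul (eval_mon mul one gen x) s) (eval_mon mul one gen y)).
  { assert (opt_word : forall o : option I, exists w,
               eval_mon mul one gen w = match o with Some a => a | None => one end).
    { intros [a|]; [apply Hgen | exists []; reflexivity]. }
    intros ox oy. destruct (opt_word ox) as [x Hx], (opt_word oy) as [y Hy].
    exists x, y. intros s. rewrite Hx, Hy.
    destruct ox, oy; cbn; rewrite ?(proj1 (Hone _)), ?(proj2 (Hone _)); reflexivity. }
  split.
  - intros Hsyn ox oy. destruct (ctx_words ox oy) as [x [y Hxy]].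
    rewrite !Hxy, <- !Hctx. apply Hsyn.
  - intros Hsyn x y. rewrite !Hctx.
    exact (Hsyn (Some (eval_mon mul one gen x)) (Some (eval_mon mul one gen y))).
Qed.

End Words.

Theorem lemma4 :
  (* semigroup version *)
  (forall (I Sigma : Type) (mul : I -> I -> I) (gen : Sigma -> I),
     inverse_semigroup mul ->
     (forall s : I, exists a w, eval_sg mul gen a w = s) ->
     forall (M : Type) (mulM : M -> M -> M) (q : list Sigma -> M),
       is_syntactic_semigroup (idem_problem_sg mul gen) mulM q ->
       exists phi : I -> M,
         (forall a w, phi (eval_sg mul gen a w) = q (a :: w)) /\
         sg_morphism mul mulM phi /\
         surjective_map phi /\
         idempotent_pure_map mul mulM phi /\
         greatest_idempotent_pure_congruence mul (kernel phi))
  /\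
  (* monoid version *)
  (forall (I Sigma : Type) (mul : I -> I -> I) (one : I) (gen : Sigma -> I),
     inverse_monoid mul one ->
     (forall s : I, exists w, eval_mon mul one gen w = s) ->
     forall (M : Type) (mulM : M -> M -> M) (oneM : M) (q : list Sigma -> M),
       is_syntactic_monoid (idem_problem_mon mul one gen) mulM oneM q ->
       exists phi : I -> M,
         (forall w, phi (eval_mon mul one gen w) = q w) /\
         sg_morphism mul mulM phi /\ phi one = oneM /\
         surjective_map phi /\
         idempotent_pure_map mul mulM phi /\
         greatest_idempotent_pure_congruence mul (kernel phi)).
Proof.
  split.
  - (* Nonempty words a :: w, coded as pairs (a, w). *)
    intros I Sigma mul gen HI Hgen M mulM q [_ [q_onto [q_app q_synt]]].
    destruct (@syntactic_factorization I (Sigma * list Sigma) M mul mulM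
                (fun p => eval_sg mul gen (fst p) (snd p)) (fun p => q (fst p :: snd p))
                (fun p p' => (fst p, snd p ++ fst p' :: snd p')) HI)
      as [phi [Hphi Hrest]].
    + intros s. destruct (Hgen s) as [a [w <-]]. exists (a, w). reflexivity.
    + intros m. destruct (q_onto m) as [a [w <-]]. exists (a, w). reflexivity.
    + intros [a u] [b v]. apply eval_sg_app, (proj1 HI).
    + intros [a u] [b v]. apply (q_app (a :: u) (b :: v)); discriminate.
    + intros [a u] [b v]. simpl. rewrite q_synt by discriminate.
      apply synt_eq_idem_problem_sg; [exact (proj1 HI) | exact Hgen].
    + exists phi. split; [intros a w; exact (Hphi (a, w)) | exact Hrest].
  - intros I Sigma mul one gen [HI Hone] Hgen M mulM oneM q
      [_ [_ [q_onto [q_nil [q_app q_synt]]]]].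
    destruct (@syntactic_factorization I (list Sigma) M mul mulM
                (eval_mon mul one gen) q (@app Sigma) HI Hgen q_onto)
      as [phi [Hphi Hrest]].
    + intros u v. apply eval_mon_app; [exact (proj1 HI) | exact Hone].
    + exact q_app.
    + intros u v. rewrite q_synt.
      apply synt_eq_idem_problem_mon; [exact (proj1 HI) | exact Hone | exact Hgen].
    + exists phi. split; [exact Hphi |]. split; [exact (proj1 Hrest) |].
      split; [rewrite <- q_nil; exact (Hphi []) | exact (proj2 Hrest)].
Qed.
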